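(* Let $x=(x_1,\dots,x_n)$ be a stochastic vector ($x_j\ge0$, $\sum_j x_j=1$) and let $P(x)=\prod_{k=1}^n(1-x_k)^{1-x_k}$. Then (i) $\max_j x_j/P(x)\le e^{1/e}$; (ii) $\sum_{j=1}^n\psi_a\!\Big(\dfrac{x_j}{2\,P(x)}\Big)\le 1$, where $\psi_a(t)=1-(1-t)a^t$ and $a$ is the unique positive root of $\frac{1-\ln a}{a}=\frac1e$.
   Context: Convention: $0^0=1$. *)

From Stdlib Require Import Reals.
Open Scope R_scope.

Fixpoint sumR (n : nat) (f : nat -> R) : R :=
  match n with O => 0 | S m => sumR m f + f m end.
Fixpoint prodR (n : nat) (f : nat -> R) : R :=
  match n with O => 1 | S m => prodR m f * f m end.

(* real power b^e for b >= 0, with the convention 0^0 = 1 (and 0^e = 0 for e <> 0) *)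
Definition rpow (b e : R) : R :=
  if Req_EM_T b 0 then (if Req_EM_T e 0 then 1 else 0) else Rpower b e.

(* P(x) = prod_{k=1}^n (1 - x_k)^(1 - x_k); indices shifted to 0..n-1 *)
Definition Pfun (n : nat) (x : nat -> R) : R :=
  prodR n (fun k => rpow (1 - x k) (1 - x k)).

Definition psi (a t : R) : R := 1 - (1 - t) * Rpower a t.

Definition stochastic (n : nat) (x : nat -> R) : Prop :=
  (forall j, (j < n)%nat -> 0 <= x j) /\ sumR n x = 1.

From Stdlib Require Import Reals Lra Lia Psatz.
Open Scope R_scope.

(** Every factor of [P] is [y^y] with [y = 1 - x_k], and [y ln y] is bounded
    below both by [-1/e] and by [(y^2 - 1)/2 >= y - 1].  For a fixed [j], the
    first bound on the [j]-th factor and [y ln y >= y - 1] on the others give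
    [P >= e^(x_j - 1 - 1/e) >= x_j e^(-1/e)], which is (i).  The second bound on
    every factor gives [P >= e^(S/2 - 1)] with [S = sum x_k^2].  Since
    [a^t >= 1 + t ln a], [psi_a t <= c t + (1 - c) t^2] on [[0,1]] for every
    [c >= 1 - ln a]; here [1 - ln a = 0.567...], so [c = 3/5] works, and (i)
    keeps every [t = x_j/(2P)] below [e^(1/e)/2 <= 1].  The sum in (ii) is then
    at most [3/(10P) + S/(10P^2)], which is at most 1 because
    [P >= (7/20)(1 + S/2)]. *)

Lemma sumR_ext n f g :
  (forall k, (k < n)%nat -> f k = g k) -> sumR n f = sumR n g.
Proof.
  induction n as [|n IH]; intros Hfg; simpl; [reflexivity|].
  rewrite IH by (intros; apply Hfg; lia).
  rewrite Hfg by lia. reflexivity.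
Qed.

Lemma sumR_le n f g :
  (forall k, (k < n)%nat -> f k <= g k) -> sumR n f <= sumR n g.
Proof.
  induction n as [|n IH]; intros Hfg; simpl; [lra|].
  assert (sumR n f <= sumR n g) by (apply IH; intros; apply Hfg; lia).
  assert (f n <= g n) by (apply Hfg; lia).
  lra.
Qed.

Lemma sumR_nonneg n f : (forall k, (k < n)%nat -> 0 <= f k) -> 0 <= sumR n f.
Proof.
  induction n as [|n IH]; intros Hf; simpl; [lra|].
  assert (0 <= sumR n f) by (apply IH; intros; apply Hf; lia).
  assert (0 <= f n) by (apply Hf; lia).
  lra.
Qed.

Lemma sumR_ge_term n f j :
  (forall k, (k < n)%nat -> 0 <= f k) -> (j < n)%nat -> f j <= sumR n f.
Proof.
  induction n as [|n IH]; intros Hf Hj; simpl; [lia|].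
  assert (0 <= f n) by (apply Hf; lia).
  destruct (Nat.eq_dec j n) as [->|Hjn].
  - assert (0 <= sumR n f) by (apply sumR_nonneg; intros; apply Hf; lia). lra.
  - assert (f j <= sumR n f) by (apply IH; [intros; apply Hf|]; lia). lra.
Qed.

Lemma sumR_plus n f g : sumR n (fun k => f k + g k) = sumR n f + sumR n g.
Proof. induction n as [|n IH]; simpl; [ring|]. rewrite IH. ring. Qed.

Lemma sumR_scal n c f : sumR n (fun k => c * f k) = c * sumR n f.
Proof. induction n as [|n IH]; simpl; [ring|]. rewrite IH. ring. Qed.

Lemma sumR_opp n f : sumR n (fun k => - f k) = - sumR n f.
Proof. induction n as [|n IH]; simpl; [ring|]. rewrite IH. ring. Qed.

Lemma sumR_update n f j c : (j < n)%nat ->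
  sumR n (fun k => if Nat.eqb k j then c else f k) = sumR n f - f j + c.
Proof.
  induction n as [|n IH]; intros Hj; simpl; [lia|].
  destruct (Nat.eq_dec j n) as [->|Hjn].
  - rewrite Nat.eqb_refl, (sumR_ext n _ f); [ring|].
    intros k Hk. destruct (Nat.eqb_spec k n); [lia|reflexivity].
  - rewrite IH by lia. destruct (Nat.eqb_spec n j); [lia|ring].
Qed.

Lemma exp_sumR_le_prodR n h f :
  (forall k, (k < n)%nat -> exp (h k) <= f k) -> exp (sumR n h) <= prodR n f.
Proof.
  induction n as [|n IH]; intros Hhf; simpl; [rewrite exp_0; lra|].
  rewrite exp_plus.
  apply Rmult_le_compat; try (left; apply exp_pos).
  - apply IH. intros; apply Hhf; lia.
  - apply Hhf; lia.
Qed.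

Lemma exp_le_exp x y : x <= y -> exp x <= exp y.
Proof. intros [Hxy| ->]; [left; apply exp_increasing|]; lra. Qed.

Lemma pow_le_exp n x : 0 <= 1 + x -> (1 + x) ^ n <= exp (INR n * x).
Proof.
  intros Hx. induction n as [|n IH]; [simpl; rewrite Rmult_0_l, exp_0; lra|].
  replace (INR (S n) * x) with (INR n * x + x) by (rewrite S_INR; ring).
  rewrite <- tech_pow_Rmult, exp_plus, Rmult_comm.
  apply Rmult_le_compat; [apply pow_le; lra | exact Hx | exact IH |].
  apply exp_ineq1_le.
Qed.

Lemma exp_m1_ge : 7/20 <= exp (-1).
Proof.
  replace (-1) with (INR 16 * - (1/16)) by (simpl; field).
  eapply Rle_trans; [|apply pow_le_exp; lra]. simpl. lra.
Qed.

Lemma exp_inv_e_le_2 : exp (/ exp 1) <= 2.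
Proof.
  assert (He : 2 < exp 1) by (replace 2 with (1 + 1) by ring; apply exp_ineq1; lra).
  assert (/ exp 1 < / 2) by (apply Rinv_lt_contravar; lra).
  rewrite <- (exp_ln 2) by lra.
  apply exp_le_exp. pose proof ln_lt_2. lra.
Qed.

Lemma sinh_ge_id s : 0 <= s -> s <= sinh s.
Proof.
  intros [Hs| <-]; [|rewrite sinh_0; lra].
  destruct (MVT_cor2 (fun s => sinh s - s) (fun s => cosh s - 1) 0 s Hs)
    as [c [Hc _]].
  { intros c _. apply derivable_pt_lim_minus;
      [apply derivable_pt_lim_sinh | apply derivable_pt_lim_id]. }
  rewrite sinh_0 in Hc.
  assert (Hcosh : 1 <= cosh c).
  { unfold cosh.
    assert (exp c * exp (- c) = 1)
      by (rewrite <- exp_plus, Rplus_opp_r; apply exp_0).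
    pose proof (exp_pos c). pose proof (exp_pos (- c)).
    pose proof (pow2_ge_0 (exp c - exp (- c))).
    nra. }
  nra.
Qed.

Lemma xlnx_ge_half_sq_sub1 y : 0 < y -> y <= 1 -> (y * y - 1) / 2 <= y * ln y.
Proof.
  intros Hy0 Hy1.
  set (s := - ln y).
  assert (Hs : 0 <= s).
  { unfold s. destruct Hy1 as [Hy1| ->]; [|rewrite ln_1; lra].
    pose proof (ln_increasing y 1 Hy0 Hy1). rewrite ln_1 in *. lra. }
  assert (Hy : y = exp (- s)) by (unfold s; rewrite Ropp_involutive, exp_ln; auto).
  assert (Hsinh := sinh_ge_id s Hs). unfold sinh in Hsinh.
  assert (Hinv : exp s * exp (- s) = 1)
    by (rewrite <- exp_plus, Rplus_opp_r; apply exp_0).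
  replace (ln y) with (- s) by (unfold s; ring).
  rewrite Hy. nra.
Qed.

Lemma xlnx_ge_m_inv_e y : 0 < y -> - / exp 1 <= y * ln y.
Proof.
  intros Hy. assert (He := exp_pos 1).
  assert (Hz : 0 < / (exp 1 * y)) by (apply Rinv_0_lt_compat; nra).
  assert (Hln := exp_ineq1_le (ln (/ (exp 1 * y)))).
  rewrite exp_ln, ln_Rinv, ln_mult, ln_exp in Hln by nra.
  assert (y * / (exp 1 * y) = / exp 1) by (field; lra).
  nra.
Qed.

Lemma exp_le_rpow_self y c :
  0 <= y -> c <= 0 -> (0 < y -> c <= y * ln y) -> exp c <= rpow y y.
Proof.
  intros Hy Hc Hyc. unfold rpow. destruct (Req_EM_T y 0) as [->|Hy0].
  - destruct (Req_EM_T 0 0) as [_|]; [|contradiction].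
    rewrite <- exp_0. apply exp_le_exp, Hc.
  - unfold Rpower. apply exp_le_exp, Hyc. lra.
Qed.

Lemma psi_le_quadratic a c t :
  0 <= t <= 1 -> 1 - c <= ln a -> psi a t <= c * t + (1 - c) * (t * t).
Proof.
  intros Ht Hc. unfold psi, Rpower.
  assert (Hexp := exp_ineq1_le (t * ln a)).
  assert ((1 - t) * (1 + t * ln a) <= (1 - t) * exp (t * ln a))
    by (apply Rmult_le_compat_l; lra).
  assert (0 <= t * (1 - t) * (ln a - (1 - c)))
    by (apply Rmult_le_pos; [apply Rmult_le_pos|]; lra).
  nra.
Qed.

(* [1 - ln a] is the omega constant [W(1) = 0.567...], the root of [m = e^(-m)]. *)
Lemma ln_root_ge a : 0 < a -> (1 - ln a) / a = / exp 1 -> 2/5 <= ln a.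
Proof.
  intros Ha Hroot.
  assert (Hfix : 1 - ln a = exp (- (1 - ln a))).
  { replace (- (1 - ln a)) with (ln a + - (1)) by ring.
    rewrite exp_plus, exp_ln, exp_Ropp by exact Ha.
    apply (Rmult_eq_compat_r a) in Hroot. unfold Rdiv in Hroot.
    rewrite Rmult_assoc, Rinv_l, Rmult_1_r in Hroot by lra.
    rewrite Hroot. ring. }
  assert (H35 : exp (- (3/5)) <= 3/5).
  { assert (5/3 <= exp (3/5)).
    { replace (3/5) with (INR 4 * (3/20)) by (simpl; field).
      eapply Rle_trans; [|apply pow_le_exp; lra]. simpl. lra. }
    rewrite exp_Ropp. replace (3/5) with (/ (5/3)) at 2 by field.
    apply Rinv_le_contravar; lra. }
  destruct (Rle_lt_dec (2/5) (ln a)) as [|Hlt]; [assumption|].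
  assert (exp (- (1 - ln a)) < exp (- (3/5))) by (apply exp_increasing; lra).
  lra.
Qed.

Section StochasticVector.

Variables (n : nat) (x : nat -> R).
Hypothesis Hx : stochastic n x.

Let sum_sq := sumR n (fun k => x k * x k).

Lemma stochastic_range k : (k < n)%nat -> 0 <= x k <= 1.
Proof.
  destruct Hx as [Hx0 Hsum]. intros Hk. split; [auto|].
  rewrite <- Hsum. apply sumR_ge_term; auto.
Qed.

Lemma Pfun_ge_exp_sum_sq : exp (sum_sq / 2 - 1) <= Pfun n x.
Proof.
  replace (sum_sq / 2 - 1)
    with (sumR n (fun k => / 2 * (x k * x k) + - x k)).
  2: { rewrite sumR_plus, sumR_scal, sumR_opp.
       destruct Hx as [_ ->]. unfold sum_sq. field. }
  apply exp_sumR_le_prodR. intros k Hk.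
  destruct (stochastic_range k Hk).
  apply exp_le_rpow_self; [lra | nra |]. intros Hy.
  pose proof (xlnx_ge_half_sq_sub1 (1 - x k) Hy ltac:(lra)). nra.
Qed.

Lemma Pfun_ge_exp_at j : (j < n)%nat -> exp (x j - 1 - / exp 1) <= Pfun n x.
Proof.
  intros Hj.
  replace (x j - 1 - / exp 1)
    with (sumR n (fun k => if Nat.eqb k j then - / exp 1 else - x k)).
  2: { rewrite sumR_update, sumR_opp by exact Hj.
       destruct Hx as [_ ->]. ring. }
  apply exp_sumR_le_prodR. intros k Hk.
  destruct (stochastic_range k Hk).
  assert (0 < / exp 1) by (apply Rinv_0_lt_compat, exp_pos).
  destruct (Nat.eqb k j).
  - apply exp_le_rpow_self; [lra | lra |]. apply xlnx_ge_m_inv_e.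
  - apply exp_le_rpow_self; [lra | lra |]. intros Hy.
    pose proof (xlnx_ge_half_sq_sub1 (1 - x k) Hy ltac:(lra)). nra.
Qed.

Lemma Pfun_pos : 0 < Pfun n x.
Proof. eapply Rlt_le_trans; [apply exp_pos | apply Pfun_ge_exp_sum_sq]. Qed.

Lemma div_Pfun_le j : (j < n)%nat -> x j / Pfun n x <= exp (/ exp 1).
Proof.
  intros Hj. pose proof Pfun_pos.
  apply (Rmult_le_reg_r (Pfun n x)); [assumption|].
  unfold Rdiv. rewrite Rmult_assoc, Rinv_l, Rmult_1_r by lra.
  assert (Hxj : x j <= exp (x j - 1))
    by (pose proof (exp_ineq1_le (x j - 1)); lra).
  replace (exp (x j - 1)) with (exp (/ exp 1) * exp (x j - 1 - / exp 1)) in Hxj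
    by (rewrite <- exp_plus; f_equal; ring).
  pose proof (Pfun_ge_exp_at j Hj).
  assert (0 < exp (/ exp 1)) by apply exp_pos.
  nra.
Qed.

Lemma sumR_psi_le_1 a :
  2/5 <= ln a -> sumR n (fun j => psi a (x j / (2 * Pfun n x))) <= 1.
Proof.
  intros Ha. set (P := Pfun n x). assert (HP : 0 < P) by apply Pfun_pos.
  assert (HS : 0 <= sum_sq)
    by (apply sumR_nonneg; intros k Hk; destruct (stochastic_range k Hk); nra).
  assert (HPS : 7/20 * (1 + sum_sq / 2) <= P).
  { eapply Rle_trans; [|apply Pfun_ge_exp_sum_sq].
    replace (sum_sq / 2 - 1) with (-1 + sum_sq / 2) by ring.
    rewrite exp_plus.
    apply Rmult_le_compat; [lra | lra | apply exp_m1_ge | apply exp_ineq1_le]. }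
  eapply Rle_trans.
  { apply (sumR_le _ _
      (fun j => 3/5 / (2 * P) * x j + 2/5 / (4 * (P * P)) * (x j * x j))).
    intros k Hk. destruct (stochastic_range k Hk).
    assert (Ht : 0 <= x k / (2 * P) <= 1).
    { split.
      - unfold Rdiv. apply Rmult_le_pos; [lra|].
        left. apply Rinv_0_lt_compat. lra.
      - replace (x k / (2 * P)) with (x k / P / 2) by (field; lra).
        pose proof (div_Pfun_le k Hk) as Hdiv. fold P in Hdiv.
        pose proof exp_inv_e_le_2. lra. }
    eapply Rle_trans; [apply (psi_le_quadratic a (3/5)); [exact Ht | lra]|].
    right. field. lra. }
  rewrite sumR_plus, !sumR_scal. fold sum_sq. destruct Hx as [_ ->].
  assert (0 <= (P - 7/20 * (1 + sum_sq / 2)) * (P + 7/20 * (1 + sum_sq / 2) - 3/10))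
    by (apply Rmult_le_pos; lra).
  assert (0 <= (sum_sq - 1/2) ^ 2) by apply pow2_ge_0.
  assert (6/5 * P + 2/5 * sum_sq <= 4 * (P * P)) by nra.
  apply (Rmult_le_reg_r (4 * (P * P))); [nra|].
  replace ((3/5 / (2 * P) * 1 + 2/5 / (4 * (P * P)) * sum_sq) * (4 * (P * P)))
    with (6/5 * P + 2/5 * sum_sq) by (field; lra).
  lra.
Qed.

End StochasticVector.

Theorem lemma4p3 (n : nat) (x : nat -> R) (a : R) :
  stochastic n x ->
  0 < a -> (1 - ln a) / a = / exp 1 ->
  (forall j, (j < n)%nat -> x j / Pfun n x <= exp (/ exp 1)) /\
  sumR n (fun j => psi a (x j / (2 * Pfun n x))) <= 1.
Proof.
  intros Hx Ha Hroot. split.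
  - exact (div_Pfun_le n x Hx).
  - exact (sumR_psi_le_1 n x Hx a (ln_root_ge a Ha Hroot)).
Qed.
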